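(* Let $G$ be a finite group, $H\subseteq G$ of index $2$, $\sigma\in G\setminus H$, $\chi:H\to\mathbb{C}^\times$ a character with $\rho=\mathrm{Ind}_H^G(\chi)$ faithful, and suppose $\epsilon_\chi=\chi^\sigma/\chi$ has order exactly $2$. Let $K=\ker(\epsilon_\chi)$ and $\chi_K=\chi|_K$. Then for every subgroup $H'\subset G$ of index $2$ and character $\chi':H'\to\mathbb{C}^\times$ with $\rho\cong \mathrm{Ind}_{H'}^G(\chi')$ one has $K\subseteq H'$ and $\chi'|_K=\chi_K$; moreover $g^2\in K$ for all $g\in G$ and $$\mathrm{tr}(\rho(g))=\begin{cases}2\chi_K(g)& g\in K,\\ 0 & g\notin K,\end{cases}\qquad \det(\rho(g))=\begin{cases}\chi_K(g^2)& g\in K,\\ -\chi_K(g^2)& g\notin K.\end{cases}$$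
   Context: $\chi^\sigma(h)=\chi(\sigma^{-1}h\sigma)$ for $h\in H$; for $H$ of index $2$ this is independent of $\sigma\in G\setminus H$. *)

From HB Require Import structures.
From mathcomp Require Import all_boot all_order all_algebra all_fingroup all_solvable all_field all_character.
Set Implicit Arguments. Unset Strict Implicit. Unset Printing Implicit Defensive.

From HB Require Import structures.
From mathcomp Require Import all_boot all_order all_algebra all_fingroup all_solvable all_field all_character.
From mathcomp Require Import ring.
Set Implicit Arguments. Unset Strict Implicit. Unset Printing Implicit Defensive.
Import Order.TTheory GRing.Theory Num.Theory.
Local Open Scope ring_scope.

(* As [eps ^+ 2 = 1], [eps] takes values in [{1, -1}]; since [H] has index 2,
   [Ind chi] restricts to [chi + chi^sigma = (1 + eps) chi] on [H] and vanishes
   off [H].  Hence the trace of [rho] is [2 chi] on [K] and [0] elsewhere; in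
   particular [K] lies in the support [H'] of any other inducing character
   [chi'], and comparing [Res_K chi' + Res_K chi'^tau = 2 Res_K chi] through
   orthogonality of linear characters gives [Res_K chi' = Res_K chi].  The
   squares of [G] lie in [K] because conjugation by [sigma] fixes [g^2] modulo
   [H] when [g] is outside [H].  Finally [rho] has degree 2, so
   [2 det A = (tr A)^2 - tr (A^2)] gives the determinant. *)

Lemma det_mx2_trace (R : comNzRingType) (A : 'M[R]_2) :
  \det A *+ 2 = \tr A ^+ 2 - \tr (A *m A).
Proof.
rewrite (expand_det_row _ 0) /mxtrace !big_ord_recl !big_ord0.
rewrite /cofactor !det_mx11 !mxE /= !big_ord_recl !big_ord0 /=.
have -> : lift (0 : 'I_2) (0 : 'I_1) = 1 by apply: val_inj.
have -> : lift (1 : 'I_2) (0 : 'I_1) = 0 by apply: val_inj.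
have -> : (ord0 : 'I_2) = 0 by apply: val_inj.
rewrite expr0 expr1 mulr2n; ring.
Qed.

Lemma mxtrace_cfRepr (gT : finGroupType) (G : {group gT}) n
    (rho : mx_representation algC G n) g :
  g \in G -> \tr (rho g) = cfRepr rho g.
Proof. by move=> Gg; rewrite cfunE Gg mulr1n. Qed.

Lemma lin_char_add_double (gT : finGroupType) (K : {group gT}) (a b c : 'CF(K)) :
  a \is a linear_char -> b \is a linear_char -> c \is a linear_char ->
  a + b = c + c -> a = c.
Proof.
move=> /lin_char_irr/irrP[i ->] /lin_char_irr/irrP[j ->] /lin_char_irr/irrP[l ->] abc.
have := congr1 (fun f => '[f, 'chi_l]) abc; rewrite /= !cfdotDl !cfdot_irr eqxx.
case: (i =P l) => [-> // | _]; case: (j == l); rewrite ?add0r => /eqP.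
  by rewrite eq_sym -subr_eq0 addrK oner_eq0.
by rewrite eq_sym -mulr2n pnatr_eq0.
Qed.

Section IndexTwo.
Variables (gT : finGroupType) (G H : {group gT}).
Hypotheses (sHG : H \subset G) (iHG : #|G : H|%g = 2%N).

Lemma mul_notin_index2 y z : y \in G :\: H -> z \in G :\: H -> (z * y)%g \in H.
Proof.
move=> yGH; have yVGH : (y^-1)%g \in G :\: H by move: yGH; rewrite !inE !groupV.
by rewrite -(rcoset_index2 sHG iHG yVGH) mem_rcoset invgK.
Qed.

Lemma expg2_index2 y : y \in G -> (y ^+ 2)%g \in H.
Proof.
move=> Gy; have [Hy | nHy] := boolP (y \in H); first by rewrite groupX.
by rewrite expgS expg1 mul_notin_index2 // inE nHy Gy.
Qed.

Lemma exists_notin_index2 : exists2 tau, tau \in G & tau \notin H.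
Proof.
apply/subsetPn/negP => sGH.
have /eqP eqGH : G == H :> {set gT} by rewrite eqEsubset sGH.
by move: iHG; rewrite eqGH indexgg.
Qed.

Lemma cfRes_Ind_index2 tau (phi : 'CF(H)) : tau \in G :\: H ->
  'Res[H] ('Ind[G] phi) = phi + (phi ^ tau)%CF.
Proof.
move=> tGH; have /setDP[Gt _] := tGH.
have Nt : tau \in 'N(H)%g by rewrite (subsetP (normal_norm (index2_normal sHG iHG))).
apply/cfun_inP => x Hx; rewrite cfResE // cfIndE // !cfunE cfConjgE //.
rewrite (bigID (mem H)) /=.
have conjH : \sum_(i in G | i \in H) phi (x ^ i)%g = \sum_(i in H) phi x.
  rewrite (eq_bigl (mem H)) => [|i]; last by apply: andb_idl => /(subsetP sHG).
  by apply: eq_bigr => i Hi; rewrite cfunJ.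
(* [tau * i] lies in [H] for every [i] outside [H], so [x ^ i] is [H]-conjugate
   to [x ^ tau^-1]. *)
have conjGH : \sum_(i in G | i \notin H) phi (x ^ i)%g
            = \sum_(i in (H :* tau)%g) phi (x ^ tau^-1)%g.
  rewrite (rcoset_index2 sHG iHG tGH); apply: eq_big => [i | i /andP[Gi nHi]].
    by rewrite in_setD andbC.
  have tiH : (tau * i)%g \in H by rewrite mul_notin_index2 // inE nHi Gi.
  by rewrite -(cfunJ _ (x ^ tau^-1)%g tiH) -conjgM mulgA mulVg mul1g.
rewrite conjH conjGH !sumr_const card_rcoset -mulrnDl -[(_ + _) *+ _]mulr_natl mulKf //.
by rewrite pnatr_eq0 -lt0n cardG_gt0.
Qed.

End IndexTwo.

Section IndexTwoInduced.
Variables (gT : finGroupType) (G H : {group gT}) (sigma : gT) (chi : 'CF(H)).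
Hypotheses (sHG : H \subset G) (iHG : #|G : H|%g = 2%N) (sGH : sigma \in G :\: H).
Hypothesis lin_chi : chi \is a linear_char.

Let eps := ((chi ^ sigma)%CF / chi)%R.
Let K := cfker eps.
Let chiK := 'Res[K] chi.
Hypothesis eps2 : eps ^+ 2 = 1.

Let Ns : sigma \in 'N(H)%g.
Proof.
have /setDP[Gs _] := sGH.
by rewrite (subsetP (normal_norm (index2_normal sHG iHG))).
Qed.

Let lin_eps : eps \is a linear_char.
Proof. by rewrite rpred_div ?cfConjg_lin_char. Qed.

Let sKH : K \subset H. Proof. exact: cfker_sub. Qed.

Lemma cfConjg_lin_twist x : x \in H -> (chi ^ sigma)%CF x = eps x * chi x.
Proof.
have eps_chi : eps * chi = (chi ^ sigma)%CF by rewrite divrK // lin_char_unitr.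
by move=> Hx; rewrite -eps_chi cfunE.
Qed.

Lemma mem_ker_twist x : x \in H -> (x \in K) = (eps x == 1).
Proof. by move=> Hx; rewrite /K cfkerEchar ?lin_charW // inE Hx lin_char1. Qed.

Lemma twist_sqr x : x \in H -> eps x ^+ 2 = 1.
Proof. by move=> Hx; rewrite -exp_cfunE // eps2 cfun1E Hx. Qed.

Lemma twist_notin_ker x : x \in H -> x \notin K -> eps x = -1.
Proof.
move=> Hx; rewrite mem_ker_twist // => /negPf eps_x_neq1.
by have /eqP := twist_sqr Hx; rewrite sqrf_eq1 eps_x_neq1 => /eqP.
Qed.

Lemma cfInd_twist x : x \in H -> 'Ind[G] chi x = (1 + eps x) * chi x.
Proof.
move=> Hx; rewrite -(cfResE _ sHG Hx) (cfRes_Ind_index2 sHG iHG _ sGH) cfunE.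
by rewrite cfConjg_lin_twist // mulrDl mul1r.
Qed.

Lemma cfInd_in_ker x : x \in K -> 'Ind[G] chi x = 2%:R * chiK x.
Proof.
move=> Kx; have Hx := subsetP sKH x Kx.
by move: (Kx); rewrite mem_ker_twist // cfInd_twist // cfResE // => /eqP->.
Qed.

Lemma cfInd_notin_ker x : x \in G -> x \notin K -> 'Ind[G] chi x = 0.
Proof.
move=> Gx nKx; have [Hx | nHx] := boolP (x \in H).
  by rewrite cfInd_twist // twist_notin_ker // subrr mul0r.
exact: cfun_on0 (cfInd_normal chi (index2_normal sHG iHG)) nHx.
Qed.

(* For [g] outside [H], [sigma^-1] is [g] times an element of [H], so conjugation by
   [sigma] fixes [chi] at [g^2], forcing [eps (g^2) = 1]. *)
Lemma expg2_in_ker g : g \in G -> (g ^+ 2)%g \in K.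
Proof.
move=> Gg; have H2 := expg2_index2 sHG iHG Gg; rewrite mem_ker_twist //.
have [Hg | nHg] := boolP (g \in H); first by rewrite lin_charX // twist_sqr.
have sgH : (sigma * g)%g \in H by rewrite (mul_notin_index2 sHG iHG) // inE nHg Gg.
have : (chi ^ sigma)%CF (g ^+ 2)%g = chi (g ^+ 2)%g.
  have gg : (g ^ g = g)%g by rewrite conjgE mulKg.
  rewrite cfConjgE // (_ : sigma^-1 = g * (sigma * g)^-1)%g; last by rewrite invMg mulKVg.
  by rewrite conjgM conjXg gg cfunJ ?groupV.
rewrite cfConjg_lin_twist // => twist_eq; apply/eqP.
by apply: (mulIf (lin_char_neq0 lin_chi H2)); rewrite mul1r.
Qed.

Section OtherInduction.
Variables (H' : {group gT}) (chi' : 'CF(H')).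
Hypotheses (sH'G : H' \subset G) (iH'G : #|G : H'|%g = 2%N).
Hypotheses (lin_chi' : chi' \is a linear_char) (Ind_eq : 'Ind[G] chi' = 'Ind[G] chi).

Let lin_chiK : chiK \is a linear_char. Proof. exact: cfRes_lin_char. Qed.

Lemma ker_twist_sub_index2 : K \subset H'.
Proof.
apply/subsetP => k Kk; apply: contraT => nH'k.
have := cfInd_in_ker Kk.
rewrite -Ind_eq (cfun_on0 (cfInd_normal chi' (index2_normal sH'G iH'G)) nH'k).
by move/esym/eqP; rewrite mulf_eq0 pnatr_eq0 (negbTE (lin_char_neq0 lin_chiK Kk)).
Qed.

Lemma cfRes_ker_twist_eq : 'Res[K] chi' = chiK.
Proof.
have [tau Gt nH't] := exists_notin_index2 sH'G iH'G.
have tGH' : tau \in G :\: H' by rewrite inE nH't Gt.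
apply: (@lin_char_add_double _ _ _ ('Res[K] (chi' ^ tau)%CF)).
- exact: cfRes_lin_char.
- exact/cfRes_lin_char/cfConjg_lin_char.
- exact: lin_chiK.
apply/cfun_inP => k Kk; have H'k := subsetP ker_twist_sub_index2 k Kk.
have := congr1 (fun f : 'CF(H') => f k) (cfRes_Ind_index2 sH'G iH'G chi' tGH').
rewrite cfResE // cfunE Ind_eq cfInd_in_ker // => Ind_k.
by rewrite [RHS]cfunE -mulr2n -mulr_natl Ind_k !cfunE !cfResE // ker_twist_sub_index2.
Qed.

End OtherInduction.

Lemma degree_Ind_index2 n (rho : mx_representation algC G n) :
  cfRepr rho = 'Ind[G] chi -> n = 2%N.
Proof.
move=> rho_chi; have := cfRepr1 rho; rewrite rho_chi cfInd1 // iHG lin_char1 // mulr1.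
by move/eqP; rewrite eqr_nat => /eqP.
Qed.

Lemma det_Ind_index2 (rho : mx_representation algC G 2) g :
  cfRepr rho = 'Ind[G] chi -> g \in G ->
  \det (rho g) = if g \in K then chiK (g ^+ 2)%g else - chiK (g ^+ 2)%g.
Proof.
move=> rho_chi Gg; have K2 := expg2_in_ker Gg.
have := det_mx2_trace (rho g).
rewrite -repr_mxM // -[(g * g)%g]expg2 !mxtrace_cfRepr ?groupX // rho_chi.
rewrite (cfInd_in_ker K2) => det2.
apply: (mulIf (x := 2%:R)); first by rewrite pnatr_eq0.
rewrite mulr_natr det2; case: ifP => Kg.
  by rewrite cfInd_in_ker // lin_charX ?cfRes_lin_char //; ring.
by rewrite cfInd_notin_ker ?Kg //; ring.
Qed.

End IndexTwoInduced.

Theorem mainTheorem2 (gT : finGroupType) (G H : {group gT}) (sigma : gT)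
  (chi : 'CF(H)) (n : nat) (rho : mx_representation algC G n) :
  H \subset G -> (#|G : H|)%g = 2%N ->
  sigma \in G :\: H ->
  chi \is a linear_char ->
  cfRepr rho = 'Ind[G] chi ->
  mx_faithful rho ->
  let eps := ((chi ^ sigma)%CF / chi)%R in
  #[eps]%CF = 2%N ->
  let K := cfker eps in
  let chiK := 'Res[K] chi in
  [/\ (forall (H' : {group gT}) (chi' : 'CF(H')),
         H' \subset G -> (#|G : H'|)%g = 2%N -> chi' \is a linear_char ->
         cfRepr rho = 'Ind[G] chi' ->
         K \subset H' /\ 'Res[K] chi' = chiK),
      {in G, forall g, (g ^+ 2)%g \in K},
      {in G, forall g, \tr (rho g) = if g \in K then 2%:R * chiK g else 0}
    & {in G, forall g, \det (rho g) =
          if g \in K then chiK ((g ^+ 2)%g) else - chiK ((g ^+ 2)%g)}].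
Proof.
move=> sHG iHG sGH lin_chi rho_chi _ eps ord_eps K chiK.
have eps2 : eps ^+ 2 = 1 by rewrite -ord_eps exp_cforder.
have Ind_in_ker := cfInd_in_ker sHG iHG sGH lin_chi.
have Ind_notin_ker := cfInd_notin_ker sHG iHG sGH lin_chi eps2.
split.
- move=> H' chi' sH'G iH'G lin_chi' rho_chi'.
  have Ind_eq : 'Ind[G] chi' = 'Ind[G] chi by rewrite -rho_chi -rho_chi'.
  split; first exact: (ker_twist_sub_index2 sHG iHG sGH lin_chi sH'G iH'G Ind_eq).
  exact: (cfRes_ker_twist_eq sHG iHG sGH lin_chi sH'G iH'G lin_chi' Ind_eq).
- by move=> g; apply: (expg2_in_ker sHG iHG sGH lin_chi eps2).
- move=> g Gg; rewrite mxtrace_cfRepr // rho_chi.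
  by case: ifP => Kg; [apply: Ind_in_ker | rewrite Ind_notin_ker ?Kg].
have n2 := degree_Ind_index2 sHG iHG lin_chi rho_chi; subst n => g.
exact: (det_Ind_index2 sHG iHG sGH lin_chi eps2 rho_chi).
Qed.
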